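(* For all prefixes $p,p'$ there is at most one prefix $p''$ such that $p \cdot p' \sim p''$. If $s$ is a stream type with $p : s$, and $s'$ is the (unique) stream type with $\delta_p s \sim s'$, and $p' : s'$, then such a $p''$ exists and satisfies: (1) $p'' : s$, and (2) the derivative of $s$ by $p''$ equals the derivative of $s'$ by $p'$, i.e. for the unique types with $\delta_{p''} s \sim u$ and $\delta_{p'} s' \sim u'$ we have $u = u'$.
   Context: Stream types are generated by $s,t ::= 1 \mid \varepsilon \mid s\cdot t \mid s\,\|\,t \mid s+t \mid s^\star$. Prefixes are generated by $p ::= \mathtt{oneEmp} \mid \mathtt{oneFull} \mid \mathtt{epsEmp} \mid \mathtt{par}(p,p') \mid \mathtt{catA}(p) \mid \mathtt{catB}(p,p') \mid \mathtt{sumEmp} \mid \mathtt{inl}(p) \mid \mathtt{inr}(p) \mid \mathtt{starEmp} \mid \mathtt{starDone} \mid \mathtt{stA}(p) \mid \mathtt{stB}(p,p')$. Maximality (inductive): $\mathtt{epsEmp}$, $\mathtt{oneFull}$, $\mathtt{starDone}$ are maximal; $\mathtt{par}(p_1,p_2)$, $\mathtt{catB}(p_1,p_2)$, $\mathtt{stB}(p_1,p_2)$ are maximal if $p_1$ and $p_2$ are; $\mathtt{inl}(p)$, $\mathtt{inr}(p)$ are maximal if $p$ is. Prefix typing $p : s$ (inductive): $\mathtt{epsEmp}:\varepsilon$; $\mathtt{oneEmp}:1$; $\mathtt{oneFull}:1$; $\mathtt{par}(p_1,p_2): s\|t$ if $p_1:s$, $p_2:t$; $\mathtt{catA}(p):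 s\cdot t$ if $p:s$; $\mathtt{catB}(p_1,p_2): s\cdot t$ if $p_1:s$, $p_1$ maximal, $p_2:t$; $\mathtt{sumEmp}: s+t$; $\mathtt{inl}(p):s+t$ if $p:s$; $\mathtt{inr}(p):s+t$ if $p:t$; $\mathtt{starEmp}:s^\star$; $\mathtt{starDone}:s^\star$; $\mathtt{stA}(p):s^\star$ if $p:s$; $\mathtt{stB}(p,p'):s^\star$ if $p:s$, $p$ maximal, $p':s^\star$. Derivative relation $\delta_p s \sim s'$ (inductive): $\delta_{\mathtt{epsEmp}}\varepsilon\sim\varepsilon$; $\delta_{\mathtt{oneEmp}}1\sim 1$; $\delta_{\mathtt{oneFull}}1\sim\varepsilon$; $\delta_{\mathtt{par}(p_1,p_2)}(s\|t)\sim s'\|t'$ if $\delta_{p_1}s\sim s'$, $\delta_{p_2}t\sim t'$; $\delta_{\mathtt{catA}(p)}(s\cdot t)\sim s'\cdot t$ if $\delta_p s\sim s'$; $\delta_{\mathtt{catB}(p_1,p_2)}(s\cdot t)\sim t'$ if $\delta_{p_2}t\sim t'$; $\delta_{\mathtt{sumEmp}}(s+t)\sim s+t$; $\delta_{\mathtt{inl}(p)}(s+t)\sim s'$ if $\delta_p s\sim s'$; $\delta_{\mathtt{inr}(p)}(s+t)\sim t'$ if $\delta_p t\sim t'$; $\delta_{\mathtt{starEmp}}s^\star\sim s^\star$; $\delta_{\mathtt{starDone}}s^\star\sim\varepsilon$; $\delta_{\mathtt{stA}(p)}s^\star\sim s'\cdot s^\star$ if $\delta_p s\sim s'$; $\delta_{\mathtt{stB}(p,p')}s^\star\sim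 s'$ if $\delta_{p'}s^\star\sim s'$. (For $p:s$ such $s'$ exists and is unique.) Prefix concatenation $p\cdot p'\sim p''$ (inductive): $\mathtt{epsEmp}\cdot\mathtt{epsEmp}\sim\mathtt{epsEmp}$; $\mathtt{oneEmp}\cdot p\sim p$ whenever $p:1$; $\mathtt{oneFull}\cdot\mathtt{epsEmp}\sim\mathtt{oneFull}$; $\mathtt{par}(p_1,p_2)\cdot\mathtt{par}(p_1',p_2')\sim\mathtt{par}(p_1'',p_2'')$ if $p_i\cdot p_i'\sim p_i''$ for $i=1,2$; $\mathtt{catA}(p)\cdot\mathtt{catA}(p')\sim\mathtt{catA}(p'')$ if $p\cdot p'\sim p''$; $\mathtt{catA}(p)\cdot\mathtt{catB}(p',q)\sim\mathtt{catB}(p'',q)$ if $p\cdot p'\sim p''$; $\mathtt{catB}(p,p')\cdot p''\sim\mathtt{catB}(p,p''')$ if $p'\cdot p''\sim p'''$; $\mathtt{sumEmp}\cdot p\sim p$; $\mathtt{inl}(p)\cdot p'\sim\mathtt{inl}(p'')$ if $p\cdot p'\sim p''$; $\mathtt{inr}(p)\cdot p'\sim\mathtt{inr}(p'')$ if $p\cdot p'\sim p''$; $\mathtt{starEmp}\cdot p\sim p$; $\mathtt{starDone}\cdot\mathtt{epsEmp}\sim\mathtt{starDone}$; $\mathtt{stA}(p)\cdot\mathtt{catA}(p')\sim\mathtt{stA}(p'')$ if $p\cdot p'\sim p''$; $\mathtt{stA}(p)\cdot\mathtt{catB}(p',q)\sim\mathtt{stB}(p'',q)$ if $p\cdot p'\sim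 p''$; $\mathtt{stB}(p,p')\cdot p''\sim\mathtt{stB}(p,p''')$ if $p'\cdot p''\sim p'''$. *)

Inductive sty : Type :=
| One : sty
| Eps : sty
| Cat : sty -> sty -> sty
| Par : sty -> sty -> sty
| Sum : sty -> sty -> sty
| Star : sty -> sty.

Inductive prefix : Type :=
| oneEmp : prefix
| oneFull : prefix
| epsEmp : prefix
| par : prefix -> prefix -> prefix
| catA : prefix -> prefix
| catB : prefix -> prefix -> prefix
| sumEmp : prefix
| inl : prefix -> prefix
| inr : prefix -> prefix
| starEmp : prefix
| starDone : prefix
| stA : prefix -> prefix
| stB : prefix -> prefix -> prefix.

Inductive maximal : prefix -> Prop :=
| max_epsEmp : maximal epsEmp
| max_oneFull : maximal oneFull
| max_starDone : maximal starDone
| max_par p1 p2 : maximal p1 -> maximal p2 -> maximal (par p1 p2)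
| max_catB p1 p2 : maximal p1 -> maximal p2 -> maximal (catB p1 p2)
| max_stB p1 p2 : maximal p1 -> maximal p2 -> maximal (stB p1 p2)
| max_inl p : maximal p -> maximal (inl p)
| max_inr p : maximal p -> maximal (inr p).

Inductive has_type : prefix -> sty -> Prop :=
| ty_epsEmp : has_type epsEmp Eps
| ty_oneEmp : has_type oneEmp One
| ty_oneFull : has_type oneFull One
| ty_par p1 p2 s t : has_type p1 s -> has_type p2 t -> has_type (par p1 p2) (Par s t)
| ty_catA p s t : has_type p s -> has_type (catA p) (Cat s t)
| ty_catB p1 p2 s t : has_type p1 s -> maximal p1 -> has_type p2 t ->
    has_type (catB p1 p2) (Cat s t)
| ty_sumEmp s t : has_type sumEmp (Sum s t)
| ty_inl p s t : has_type p s -> has_type (inl p) (Sum s t)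
| ty_inr p s t : has_type p t -> has_type (inr p) (Sum s t)
| ty_starEmp s : has_type starEmp (Star s)
| ty_starDone s : has_type starDone (Star s)
| ty_stA p s : has_type p s -> has_type (stA p) (Star s)
| ty_stB p p' s : has_type p s -> maximal p -> has_type p' (Star s) ->
    has_type (stB p p') (Star s).

Inductive deriv : prefix -> sty -> sty -> Prop :=
| d_epsEmp : deriv epsEmp Eps Eps
| d_oneEmp : deriv oneEmp One One
| d_oneFull : deriv oneFull One Eps
| d_par p1 p2 s t s' t' : deriv p1 s s' -> deriv p2 t t' ->
    deriv (par p1 p2) (Par s t) (Par s' t')
| d_catA p s t s' : deriv p s s' -> deriv (catA p) (Cat s t) (Cat s' t)
| d_catB p1 p2 s t t' : deriv p2 t t' -> deriv (catB p1 p2) (Cat s t) t'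
| d_sumEmp s t : deriv sumEmp (Sum s t) (Sum s t)
| d_inl p s t s' : deriv p s s' -> deriv (inl p) (Sum s t) s'
| d_inr p s t t' : deriv p t t' -> deriv (inr p) (Sum s t) t'
| d_starEmp s : deriv starEmp (Star s) (Star s)
| d_starDone s : deriv starDone (Star s) Eps
| d_stA p s s' : deriv p s s' -> deriv (stA p) (Star s) (Cat s' (Star s))
| d_stB p p' s s' : deriv p' (Star s) s' -> deriv (stB p p') (Star s) s'.

Inductive pcat : prefix -> prefix -> prefix -> Prop :=
| c_epsEmp : pcat epsEmp epsEmp epsEmp
| c_oneEmp p : has_type p One -> pcat oneEmp p p
| c_oneFull : pcat oneFull epsEmp oneFull
| c_par p1 p2 p1' p2' p1'' p2'' : pcat p1 p1' p1'' -> pcat p2 p2' p2'' ->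
    pcat (par p1 p2) (par p1' p2') (par p1'' p2'')
| c_catA_catA p p' p'' : pcat p p' p'' -> pcat (catA p) (catA p') (catA p'')
| c_catA_catB p p' p'' q : pcat p p' p'' -> pcat (catA p) (catB p' q) (catB p'' q)
| c_catB p p' p'' p''' : pcat p' p'' p''' -> pcat (catB p p') p'' (catB p p''')
| c_sumEmp p : pcat sumEmp p p
| c_inl p p' p'' : pcat p p' p'' -> pcat (inl p) p' (inl p'')
| c_inr p p' p'' : pcat p p' p'' -> pcat (inr p) p' (inr p'')
| c_starEmp p : pcat starEmp p p
| c_starDone : pcat starDone epsEmp starDone
| c_stA_catA p p' p'' : pcat p p' p'' -> pcat (stA p) (catA p') (stA p'')
| c_stA_catB p p' p'' q : pcat p p' p'' -> pcat (stA p) (catB p' q) (stB p'' q)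
| c_stB p p' p'' p''' : pcat p' p'' p''' -> pcat (stB p p') p'' (stB p p''').


(* The derivative of [s] by [p . p'] only looks at
   the part of [p . p'] contributed by [p'], which is a prefix of [δ_p s];
   this gives [δ_(p . p') s = δ_p' (δ_p s)] without any typing assumption.
   Typing of [p . p'] needs one extra invariant: when [p'] completes the
   residual left component of a sequence or star, so does [p . p']
   ([pcat_maximal]), which is what the rules for [catB] and [stB] demand. *)

Lemma deriv_functional p s u1 u2 : deriv p s u1 -> deriv p s u2 -> u1 = u2.
Proof.
  intros H1; revert u2.
  induction H1; intros u2 H2; inversion H2; subst; f_equal; auto.
Qed.

Lemma has_type_deriv p s : has_type p s -> exists u, deriv p s u.
Proof.
  induction 1;
    repeat match goal with H : exists _, _ |- _ => destruct H end;
    eexists; econstructor; eauto.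
Qed.

Lemma pcat_functional p p' q1 q2 : pcat p p' q1 -> pcat p p' q2 -> q1 = q2.
Proof.
  intros H1; revert q2.
  induction H1; intros q2 H2; inversion H2; subst; f_equal; auto.
Qed.

Lemma pcat_deriv p p' p'' s s' u :
  pcat p p' p'' -> deriv p s s' -> deriv p' s' u -> deriv p'' s u.
Proof.
  intros Hc; revert s s' u.
  induction Hc; intros s0 s0' u Hd Hd';
    inversion Hd; subst; try (inversion Hd'; subst); eauto using deriv.
Qed.

Lemma pcat_maximal p p' p'' s :
  has_type p s -> pcat p p' p'' -> maximal p' -> maximal p''.
Proof.
  intros Ht Hc; revert s Ht.
  induction Hc; intros s0 Ht Hm;
    inversion Ht; subst; try (inversion Hm; subst); eauto using maximal.
Qed.

Local Ltac apply_concat_IH :=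
  repeat match goal with
  | IH : forall s' p', deriv ?p ?s s' -> has_type p' s' -> exists _, _,
    Hd : deriv ?p ?s ?s', Hq : has_type ?q ?s' |- _ =>
      destruct (IH _ _ Hd Hq) as (? & ? & ?); clear IH
  end.

Lemma pcat_has_type p s s' p' :
  has_type p s -> deriv p s s' -> has_type p' s' ->
  exists p'', pcat p p' p'' /\ has_type p'' s.
Proof.
  intros Ht; revert s' p'.
  induction Ht; intros s0' q Hd Hq; inversion Hd; subst;
    (* [p'] is inverted only after the cases with an unstructured residual
       have used it, since inversion replaces it by its constructors. *)
    apply_concat_IH; try (inversion Hq; subst); apply_concat_IH;
    eauto 7 using pcat, has_type, pcat_maximal.
Qed.

Theorem mainTheorem6 :
  (forall p p' q1 q2 : prefix, pcat p p' q1 -> pcat p p' q2 -> q1 = q2) /\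
  (forall (p p' : prefix) (s s' : sty),
      has_type p s -> deriv p s s' -> has_type p' s' ->
      exists p'' : prefix,
        pcat p p' p'' /\
        has_type p'' s /\
        (exists u, deriv p'' s u /\ deriv p' s' u) /\
        (forall u u' : sty, deriv p'' s u -> deriv p' s' u' -> u = u')).
Proof.
  split.
  - exact pcat_functional.
  - intros p p' s s' Hp Hd Hp'.
    destruct (pcat_has_type p s s' p' Hp Hd Hp') as (p'' & Hc & Hp'').
    destruct (has_type_deriv p' s' Hp') as (u & Hu).
    assert (Hu'' : deriv p'' s u) by exact (pcat_deriv _ _ _ _ _ _ Hc Hd Hu).
    exists p''; repeat split; eauto.
    intros v v' Hv Hv'.
    rewrite (deriv_functional _ _ _ _ Hv Hu'').
    exact (deriv_functional _ _ _ _ Hu Hv').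
Qed.
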